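(* For quantum states $\rho,\sigma\in\mathbb{C}^{d\times d}$, $D_{KL}(\rho\|\sigma) \le \bigl(2 + D_\infty(\rho\|\sigma)\bigr)\cdot D_H^2(\rho\|\sigma)$.
   Context: $D_{KL}(\rho\|\sigma) = \mathrm{tr}(\rho(\ln\rho-\ln\sigma))$. The quantum Hellinger distance squared is $D_H^2(\rho\|\sigma) = \mathrm{tr}((\sqrt\rho - \sqrt\sigma)^2) = 2(1 - \mathrm{tr}(\sqrt\rho\sqrt\sigma))$. With spectral decompositions $\rho = \sum_i p_i|\varphi_i\rangle\langle\varphi_i|$, $\sigma = \sum_j q_j|\psi_j\rangle\langle\psi_j|$, the conventional quantum $\infty$-Rényi divergence is $D_\infty(\rho\|\sigma) = \max\{\ln(p_i/q_j) : p_i|\langle\varphi_i|\psi_j\rangle|^2 \ne 0\}$ (equal to $+\infty$ if some such pair has $q_j = 0$); it is the $\alpha\to\infty$ case of $D_\alpha(\rho\|\sigma) = \frac{1}{\alpha-1}\ln\mathrm{tr}(\rho^\alpha\sigma^{1-\alpha})$. *)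

From HB Require Import structures.
From mathcomp Require Import all_boot all_order all_algebra.
From mathcomp Require Import complex.
From mathcomp Require Import all_classical all_reals all_analysis.
Set Implicit Arguments. Unset Strict Implicit. Unset Printing Implicit Defensive.
Import Order.TTheory GRing.Theory Num.Theory.
Local Open Scope ring_scope.

Section Quantum.
Variables (R : realType) (d : nat).
Local Notation C := R[i].

Definition adjm (m n : nat) (A : 'M[C]_(m, n)) : 'M[C]_(n, m) :=
  (map_mx (@conjc R) A)^T.

Definition unitary (U : 'M[C]_d) : Prop := U *m adjm U = 1%:M.

Definition is_state (rho : 'M[C]_d) : Prop :=
  [/\ adjm rho = rho,
      (forall v : 'cV[C]_d, 0 <= (adjm v *m rho *m v) 0 0)
    & \tr rho = 1].

(* rho = U diag(p) U^*, i.e. rho = sum_i p_i |phi_i><phi_i| with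
   phi_i the i-th column of the unitary U. *)
Definition spectral_dec (rho U : 'M[C]_d) (p : 'I_d -> R) : Prop :=
  unitary U /\ rho = U *m diag_mx (\row_i ((p i)%:C)%C) *m adjm U.

Definition mat_fun (f : R -> R) (U : 'M[C]_d) (p : 'I_d -> R) : 'M[C]_d :=
  U *m diag_mx (\row_i ((f (p i))%:C)%C) *m adjm U.

Definition overlap (U V : 'M[C]_d) (i j : 'I_d) : R :=
  let z := (adjm U *m V) i j in (complex.Re z) ^+ 2 + (complex.Im z) ^+ 2.

(* Umegaki relative entropy tr(rho (ln rho - ln sigma)), with the usual
   conventions (ln taken on the support, 0 ln 0 = 0; mathcomp's ln 0 = 0),
   and +oo when supp rho is not contained in supp sigma (ker sigma not in ker rho). *)
Definition D_KL (rho sigma U V : 'M[C]_d) (p q : 'I_d -> R) : \bar R :=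
  if `[< forall v : 'cV[C]_d, sigma *m v = 0 -> rho *m v = 0 >]
  then (complex.Re (\tr (rho *m (mat_fun (@ln R) U p - mat_fun (@ln R) V q))))%:E
  else +oo%E.

Definition D_H2 (U V : 'M[C]_d) (p q : 'I_d -> R) : R :=
  complex.Re (\tr ((mat_fun (@Num.sqrt R) U p - mat_fun (@Num.sqrt R) V q) ^+ 2)).

(* D_infty = max { ln(p_i/q_j) : p_i |<phi_i|psi_j>|^2 <> 0 }, +oo if some such
   pair has q_j = 0 (for a state the set of such pairs is nonempty). *)
Definition D_inf (U V : 'M[C]_d) (p q : 'I_d -> R) : \bar R :=
  \big[Order.max/-oo%E]_(i < d) \big[Order.max/-oo%E]_(j < d)
    (if p i * overlap U V i j != 0 then
       (if q j == 0 then +oo%E else (@ln R (p i / q j))%:E)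
     else -oo%E).

End Quantum.

(* Diagonalising both states, w_ij = |<phi_i|psi_j>|^2 is doubly stochastic and
     D_KL  = sum_ij w_ij (p_i (ln p_i - ln q_j) - p_i + q_j),
     D_H^2 = sum_ij w_ij (sqrt p_i - sqrt q_j)^2,
   so it suffices to compare the summands.  With s = sqrt (p_i / q_j) and
   L >= max (0, ln (p_i / q_j)) this is the one-variable inequality
   2 s^2 ln s - s^2 + 1 <= (2 + L) (s - 1)^2, proved by monotonicity separately
   for s >= 1 and s <= 1.  D_inf >= 0 because some pair with w_ij p_i > 0 has
   q_j <= p_i, as sum_ij w_ij (p_i - q_j) = 0. *)

From HB Require Import structures.
From mathcomp Require Import all_boot all_order all_algebra.
From mathcomp Require Import complex.
From mathcomp Require Import all_classical all_reals all_analysis.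
From mathcomp Require Import ring lra.
Set Implicit Arguments. Unset Strict Implicit. Unset Printing Implicit Defensive.
Import Order.TTheory GRing.Theory Num.Theory.
Local Open Scope ring_scope.

Section LogInequalities.
Variable R : realType.

Lemma ln_le_subr1 (x : R) : 0 < x -> ln x <= x - 1.
Proof. by move=> x0; have := @le_ln1Dx R (x - 1); rewrite addrCA subrr addr0; apply; lra. Qed.

Lemma ger0_derive_le_pos (f df : R -> R) (a b : R) : 0 < a -> a <= b ->
  (forall x : R, 0 < x -> is_derive x 1 f (df x)) ->
  (forall x : R, 0 < x -> 0 <= df x) -> f a <= f b.
Proof.
move=> a0 ab fD df0.
have xpos x : x \in `[a, b] -> 0 < x by rewrite in_itv /= => /andP[/(lt_le_trans a0)].
have fdv : {in `[a, b], forall x, derivable f x 1}.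
  by move=> x /xpos/fD [].
have fcont := derivable_within_continuous fdv.
have fD' x : x \in `]a, b[ -> is_derive x 1 f (df x).
  by rewrite in_itv /= => /andP[ax _]; apply/fD/(lt_trans a0).
have [c /xpos c0 fE] := MVT_segment ab fD' fcont.
by rewrite -subr_ge0 fE mulr_ge0 ?df0 // subr_ge0.
Qed.

Lemma ln_mul_le_ge1 (s : R) : 1 <= s ->
  2 * (2 * s - 1) * ln s <= (s - 1) * (3 * s - 1).
Proof.
move=> s1.
pose f : R -> R := (@id R - cst 1) * ((3 : R) *: @id R - cst 1)
  - (2 : R) *: (((2 : R) *: @id R - cst 1) * @ln R).
pose df : R -> R := fun x => 6 * x - 8 + 2 / x - 4 * ln x.
suff: f 1 <= f s.
  rewrite /f !fctE /GRing.scale /= ln1 !mulr0 !subrr !mul0r subr0 subr_ge0.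
  by rewrite mulrA.
apply: (@ger0_derive_le_pos f df 1 s ltr01 s1) => x x0.
  have := is_derive1_ln x0.
  rewrite /f /df => lnD; apply: is_derive_eq.
  by rewrite !fctE /GRing.scale /=; field; rewrite gt_eqF.
have : 0 <= 2 * (x - 1) ^+ 2 / x.
  by apply: divr_ge0; [rewrite mulr_ge0 ?sqr_ge0 | exact: ltW].
have -> : 2 * (x - 1) ^+ 2 / x = 2 * x - 4 + 2 / x by field; rewrite gt_eqF.
have := @ln_le_subr1 x x0; rewrite /df; lra.
Qed.

Lemma ln_mul_le_le1 (s : R) : 0 < s -> s <= 1 ->
  2 * s ^+ 2 * ln s <= (s - 1) * (3 * s - 1).
Proof.
move=> s0 s1.
pose f : R -> R :=
  (2 : R) *: (@id R ^+ 2 * @ln R) - (@id R - cst 1) * ((3 : R) *: @id R - cst 1).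
pose df : R -> R := fun x => 4 * (x * ln x - x + 1).
suff: f s <= f 1.
  by rewrite /f !fctE /GRing.scale /= ln1 !mulr0 !subrr !mul0r subr0 subr_le0 mulrA.
apply: (@ger0_derive_le_pos f df s 1 s0 s1) => x x0.
  have := is_derive1_ln x0.
  rewrite /f /df => lnD; apply: is_derive_eq.
  by rewrite !fctE /GRing.scale /=; field; rewrite gt_eqF.
have : 1 - x^-1 <= ln x.
  by have := @ln_le_subr1 x^-1; rewrite lnV ?posrE // invr_gt0 => /(_ x0); lra.
move=> /(ler_wpM2l (ltW x0)); rewrite mulrBr mulr1 mulfV ?gt_eqF // /df; lra.
Qed.

Lemma ln_sqr_le (s L : R) : 0 < s -> 0 <= L -> 2 * ln s <= L ->
  2 * s ^+ 2 * ln s - s ^+ 2 + 1 <= (2 + L) * (s - 1) ^+ 2.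
Proof.
move=> s0 L0 lnL; have [s1|s1] := lerP 1 s.
- have := ln_mul_le_ge1 s1.
  have : 0 <= (L - 2 * ln s) * (s - 1) ^+ 2 by rewrite mulr_ge0 ?sqr_ge0 ?subr_ge0.
  nra.
- have := ln_mul_le_le1 s0 (ltW s1).
  have : 0 <= L * (s - 1) ^+ 2 by rewrite mulr_ge0 ?sqr_ge0.
  nra.
Qed.

Lemma kl_term_le (p q L : R) : 0 <= p -> 0 <= q -> 0 <= L ->
  (p != 0 -> q != 0 /\ ln (p / q) <= L) ->
  p * (ln p - ln q) - p + q <= (2 + L) * (Num.sqrt p - Num.sqrt q) ^+ 2.
Proof.
move=> p0 q0 L0 pqL; have [->|pn0] := eqVneq p 0.
  by rewrite sqrtr0 sub0r sqrrN sqr_sqrtr // !mul0r subr0 add0r ler_peMl //; lra.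
have [qn0 lnL] := pqL pn0.
have pp : 0 < p by rewrite lt_def pn0.
have qp : 0 < q by rewrite lt_def qn0.
set a := Num.sqrt p; set b := Num.sqrt q.
have ap : 0 < a by rewrite sqrtr_gt0.
have bp : 0 < b by rewrite sqrtr_gt0.
have pE : p = a ^+ 2 by rewrite sqr_sqrtr.
have qE : q = b ^+ 2 by rewrite sqr_sqrtr.
have lnE : ln p - ln q = 2 * ln (a / b).
  by rewrite -ln_div ?posrE // pE qE -expr_div_n lnXn ?divr_gt0 // mulr_natl mulr2n.
have lnL' : 2 * ln (a / b) <= L by rewrite -lnE -ln_div ?posrE.
have bn0 : b != 0 by rewrite gt_eqF.
have := ler_wpM2l (ltW (mulr_gt0 bp bp)) (ln_sqr_le (divr_gt0 ap bp) L0 lnL').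
by congr (_ <= _); [rewrite lnE pE qE | ]; field.
Qed.

End LogInequalities.

Lemma sumr2_gt0 (R : numDomainType) (I J : finType) (F : I -> J -> R) i j :
  (forall i j, 0 <= F i j) -> 0 < F i j -> 0 < \sum_i \sum_j F i j.
Proof.
move=> F_ge0 Fij; rewrite pair_bigA lt_def sumr_ge0 ?andbT // psumr_neq0 //.
by apply/hasP; exists (i, j); rewrite ?mem_index_enum.
Qed.

Section WeightedDivergences.
Variables (R : realType) (d : nat) (w : 'I_d -> 'I_d -> R) (p q : 'I_d -> R).
Hypotheses (w_ge0 : forall i j, 0 <= w i j) (p_ge0 : forall i, 0 <= p i)
  (q_ge0 : forall j, 0 <= q j).

Lemma weighted_hellinger_gt0 i j : p i * w i j != 0 -> q j = 0 ->
  0 < \sum_i \sum_j w i j * (Num.sqrt (p i) - Num.sqrt (q j)) ^+ 2.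
Proof.
move=> pw q0.
pose F i j := w i j * (Num.sqrt (p i) - Num.sqrt (q j)) ^+ 2.
apply: (@sumr2_gt0 _ _ _ F i j) => [i' j'|]; first by rewrite mulr_ge0 ?sqr_ge0.
by rewrite /F q0 sqrtr0 subr0 sqr_sqrtr // mulrC lt_def pw mulr_ge0.
Qed.

Lemma weighted_kl_le (L : R) : 0 <= L ->
  (forall i j, p i * w i j != 0 -> q j != 0 /\ ln (p i / q j) <= L) ->
  \sum_i \sum_j w i j * (p i * (ln (p i) - ln (q j)) - p i + q j)
  <= (2 + L) * \sum_i \sum_j w i j * (Num.sqrt (p i) - Num.sqrt (q j)) ^+ 2.
Proof.
move=> L0 pqL; rewrite mulr_sumr; apply: ler_sum => i _.
rewrite mulr_sumr; apply: ler_sum => j _.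
rewrite mulrCA; have [->|wn0] := eqVneq (w i j) 0; first by rewrite !mul0r.
by apply/ler_wpM2l/kl_term_le => // pn0; apply/pqL/mulf_neq0.
Qed.

End WeightedDivergences.

Section DoublyStochastic.
Variables (R : numDomainType) (d : nat) (w : 'I_d -> 'I_d -> R).
Hypotheses (w_ge0 : forall i j, 0 <= w i j)
  (w_row : forall i, \sum_j w i j = 1) (w_col : forall j, \sum_i w i j = 1).

Lemma sum_row_weighted (a : 'I_d -> R) : \sum_i \sum_j w i j * a i = \sum_i a i.
Proof. by apply: eq_bigr => i _; rewrite -mulr_suml w_row mul1r. Qed.

Lemma sum_col_weighted (b : 'I_d -> R) : \sum_i \sum_j w i j * b j = \sum_j b j.
Proof.
by rewrite exchange_big; apply: eq_bigr => j _; rewrite -mulr_suml w_col mul1r.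
Qed.

Lemma sum_weighted_diff (a b : 'I_d -> R) :
  \sum_i \sum_j w i j * (b j - a i) = (\sum_j b j) - \sum_i a i.
Proof.
rewrite -(sum_row_weighted a) -(sum_col_weighted b) -sumrB.
by apply: eq_bigr => i _; rewrite -sumrB; apply: eq_bigr => j _; rewrite mulrBr.
Qed.

Lemma exists_weighted_le (p q : 'I_d -> R) :
  (forall i, 0 <= p i) -> (forall j, 0 <= q j) -> \sum_i p i = 1 -> \sum_j q j = 1 ->
  exists i j, p i * w i j != 0 /\ q j <= p i.
Proof.
move=> p_ge0 q_ge0 p_sum q_sum.
suff /existsP[i /existsP[j /andP[pw qp]]] :
    [exists i, exists j, (p i * w i j != 0) && (q j <= p i)] by exists i, j.
apply: contraT => /existsPn none.
pose F (k : 'I_d * 'I_d) := w k.1 k.2 * (q k.2 - p k.1).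
have F_gt0 i j : p i * w i j != 0 -> 0 < F (i, j).
  move=> pw; have /existsPn/(_ j) := none i; rewrite pw /= -real_ltNge ?ger0_real // => pq.
  rewrite mulr_gt0 ?subr_gt0 // lt_def w_ge0 andbT.
  by apply: contraNneq pw => ->; rewrite mulr0.
have F_ge0 k : 0 <= F k.
  case: k => i j; have [pw0|/F_gt0/ltW //] := eqVneq (p i * w i j) 0.
  move/eqP: pw0; rewrite mulf_eq0 => /orP[]/eqP w0; rewrite /F /= ?w0 ?mul0r //.
  by rewrite subr0 mulr_ge0.
have F0 : \sum_k F k = 0.
  by rewrite -(pair_bigA _ (fun i j => F (i, j))) /F /= sum_weighted_diff p_sum q_sum subrr.
have pw0 i j : p i * w i j = 0.
  apply/eqP/negPn/negP => /F_gt0; rewrite (psumr_eq0P (fun k _ => F_ge0 k) F0) ?ltxx //.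
have := sum_row_weighted p; rewrite p_sum big1 => [/eqP|i _]; first by rewrite eq_sym oner_eq0.
by apply: big1 => j _; rewrite mulrC.
Qed.

End DoublyStochastic.

Section Spectral.
Variables (R : realType) (d : nat).
Local Notation C := R[i].
Implicit Types (U V : 'M[C]_d) (p q : 'I_d -> R).

Lemma adjmM m n k (A : 'M[C]_(m, n)) (B : 'M[C]_(n, k)) :
  adjm (A *m B) = adjm B *m adjm A.
Proof. by rewrite /adjm map_mxM trmx_mul. Qed.

Lemma adjmK m n (A : 'M[C]_(m, n)) : adjm (adjm A) = A.
Proof. by apply/matrixP => i j; rewrite !mxE conjcK. Qed.

Lemma unitary_adjmK U : unitary U -> adjm U *m U = 1%:M.
Proof. exact: mulmx1C. Qed.

Lemma overlapE U V i j :
  (overlap U V i j)%:C%C = (adjm U *m V) i j * ((adjm U *m V) i j)^*%C.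
Proof. by rewrite /overlap add_Re2_Im2 sqr_normc. Qed.

Lemma overlap_ge0 U V i j : 0 <= overlap U V i j.
Proof. by rewrite addr_ge0 ?sqr_ge0. Qed.

Lemma overlap_row_sum U V i : unitary U -> unitary V ->
  \sum_j overlap U V i j = 1.
Proof.
move=> hU hV; apply: (@complexI R); rewrite rmorph_sum rmorph1 /=.
have : (adjm U *m V *m adjm (adjm U *m V)) i i = 1.
  by rewrite adjmM adjmK mulmxA -(mulmxA _ V) hV mulmx1 unitary_adjmK // mxE eqxx.
by rewrite mxE => <-; apply: eq_bigr => j _; rewrite overlapE !mxE.
Qed.

Lemma overlap_col_sum U V j : unitary U -> unitary V ->
  \sum_i overlap U V i j = 1.
Proof.
move=> hU hV; apply: (@complexI R); rewrite rmorph_sum rmorph1 /=.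
have : (adjm (adjm U *m V) *m (adjm U *m V)) j j = 1.
  by rewrite adjmM adjmK mulmxA -(mulmxA _ U) hU mulmx1 unitary_adjmK // mxE eqxx.
by rewrite mxE => <-; apply: eq_bigr => i _; rewrite overlapE !mxE mulrC.
Qed.

Lemma overlap_unitary U i j : unitary U -> overlap U U i j = (i == j)%:R.
Proof.
move=> hU; apply: (@complexI R).
by rewrite overlapE unitary_adjmK // mxE rmorph_nat; case: eqP; rewrite ?mulr1 ?mulr0.
Qed.

Lemma mxtrace_mat_funM (f g : R -> R) U V p q :
  \tr (mat_fun f U p *m mat_fun g V q)
  = (\sum_i \sum_j f (p i) * g (q j) * overlap U V i j)%:C%C.
Proof.
set W := adjm U *m V.
have -> : \tr (mat_fun f U p *m mat_fun g V q) =
    \tr (diag_mx (\row_i (f (p i))%:C%C) *m W *m diag_mx (\row_j (g (q j))%:C%C) *m adjm W).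
  by rewrite /mat_fun -!mulmxA mxtrace_mulC /W adjmM adjmK -!mulmxA.
rewrite rmorph_sum; apply: eq_bigr => i _; rewrite mxE rmorph_sum.
apply: eq_bigr => j _; rewrite !rmorphM /= overlapE mul_mx_diag mul_diag_mx !mxE.
by ring.
Qed.

Lemma mxtrace_mat_funM_unitary (f g : R -> R) U p : unitary U ->
  \tr (mat_fun f U p *m mat_fun g U p) = (\sum_i f (p i) * g (p i))%:C%C.
Proof.
move=> hU; rewrite mxtrace_mat_funM; congr (_%:C)%C; apply: eq_bigr => i _.
rewrite (bigD1 i) //= overlap_unitary // eqxx mulr1 big1 ?addr0 // => j /negbTE.
by rewrite overlap_unitary // eq_sym => ->; rewrite mulr0.
Qed.

Lemma mxtrace_mat_fun (f : R -> R) U p : unitary U ->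
  \tr (mat_fun f U p) = (\sum_i f (p i))%:C%C.
Proof.
move=> hU; rewrite /mat_fun mxtrace_mulC mulmxA unitary_adjmK // mul1mx rmorph_sum.
by apply: eq_bigr => i _; rewrite !mxE eqxx mulr1n.
Qed.

Lemma state_eigen_ge0 rho U p : is_state rho -> spectral_dec rho U p ->
  forall i, 0 <= p i.
Proof.
move=> [_ rho_psd _] [hU rhoE] i.
have := rho_psd (U *m delta_mx i 0).
rewrite rhoE adjmM -!mulmxA (mulmxA (adjm U) U) unitary_adjmK // mul1mx.
rewrite !mulmxA -(mulmxA _ (adjm U)) unitary_adjmK // mulmx1.
have -> : adjm (delta_mx i 0 : 'cV[C]_d) = delta_mx 0 i.
  by apply/matrixP => k l; rewrite !mxE rmorph_nat andbC.
by rewrite -rowE -colE !mxE eqxx mulr1n ler0c.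
Qed.

Lemma state_eigen_sum rho U p : is_state rho -> spectral_dec rho U p ->
  \sum_i p i = 1.
Proof.
move=> [_ _ tr1] [hU rhoE]; apply: (@complexI R).
by rewrite rmorph1 -tr1 rhoE -/(mat_fun id U p) mxtrace_mat_fun.
Qed.

Lemma D_H2_overlap U V p q : unitary U -> unitary V ->
  D_H2 U V p q = \sum_i \sum_j overlap U V i j * (Num.sqrt (p i) - Num.sqrt (q j)) ^+ 2.
Proof.
move=> hU hV; have w_row := overlap_row_sum _ hU hV; have w_col := overlap_col_sum _ hU hV.
rewrite /D_H2 expr2 -mulmxE mulmxBl !mulmxBr !raddfB /=.
rewrite [\tr (mat_fun _ V q *m _)]mxtrace_mulC !mxtrace_mat_funM_unitary //.
rewrite mxtrace_mat_funM /=.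
rewrite -(sum_row_weighted w_row (fun i => Num.sqrt (p i) * Num.sqrt (p i))).
rewrite -(sum_col_weighted w_col (fun j => Num.sqrt (q j) * Num.sqrt (q j))).
rewrite -!sumrN -!big_split; apply: eq_bigr => i _.
rewrite -!sumrN -!big_split; apply: eq_bigr => j _ /=.
by ring.
Qed.

Lemma rel_entropy_overlap rho U V p q : spectral_dec rho U p -> unitary V ->
  \sum_i p i = \sum_j q j ->
  complex.Re (\tr (rho *m (mat_fun (@ln R) U p - mat_fun (@ln R) V q)))
  = \sum_i \sum_j overlap U V i j * (p i * (ln (p i) - ln (q j)) - p i + q j).
Proof.
move=> [hU ->] hV pq_sum.
have w_row := overlap_row_sum _ hU hV; have w_col := overlap_col_sum _ hU hV.
have sum0 : \sum_i \sum_j overlap U V i j * (q j - p i) = 0.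
  by rewrite sum_weighted_diff // pq_sum subrr.
rewrite -/(mat_fun id U p) mulmxBr raddfB /= mxtrace_mat_funM_unitary //.
rewrite mxtrace_mat_funM /= -[LHS]addr0 -[X in _ + X = _]sum0.
rewrite -(sum_row_weighted w_row (fun i => p i * ln (p i))).
rewrite -!sumrN -!big_split; apply: eq_bigr => i _.
rewrite -!sumrN -!big_split; apply: eq_bigr => j _ /=.
by ring.
Qed.

Lemma overlap_support_ker_sub rho sigma U V p q :
  spectral_dec rho U p -> spectral_dec sigma V q ->
  (forall i j, p i * overlap U V i j != 0 -> q j != 0) ->
  forall v : 'cV[C]_d, sigma *m v = 0 -> rho *m v = 0.
Proof.
move=> [hU ->] [hV sigmaE] supp v sigma_v.
set x := adjm V *m v; set W := adjm U *m V.
have qx j k : (q j)%:C%C * x j k = 0.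
  have := congr1 (mulmx (adjm V)) sigma_v.
  rewrite sigmaE !mulmxA unitary_adjmK // mul1mx -mulmxA mul_diag_mx mulmx0.
  by move/matrixP/(_ j k); rewrite !mxE.
have -> : v = V *m x by rewrite mulmxA hV mul1mx.
rewrite -!mulmxA (mulmxA (adjm U)) -/W.
suff -> : diag_mx (\row_i (p i)%:C%C) *m (W *m x) = 0 by rewrite mulmx0.
apply/matrixP => i k; rewrite mul_diag_mx !mxE mulr_sumr big1 // => j _.
have [q0|qn0] := eqVneq (q j) 0; last first.
  have /eqP := qx j k; rewrite mulf_eq0 => /orP[/eqP/complexI/eqP|/eqP ->].
    by rewrite (negbTE qn0).
  by rewrite !mulr0.
have /eqP : p i * overlap U V i j = 0.
  by apply/eqP/negPn/negP => /supp; rewrite q0 eqxx.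
rewrite mulf_eq0 => /orP[/eqP -> | /eqP w0]; first by rewrite mul0r.
have /eqP : W i j * (W i j)^*%C = 0 by rewrite -overlapE w0.
by rewrite mulf_eq0 conjc_eq0 orbb => /eqP ->; rewrite mul0r mulr0.
Qed.

End Spectral.

Section InfinityDivergence.
Variables (R : realType) (d : nat) (U V : 'M[R[i]]_d) (p q : 'I_d -> R).

Lemma D_inf_ge i j : p i * overlap U V i j != 0 -> q j != 0 ->
  ((ln (p i / q j))%:E <= D_inf U V p q)%E.
Proof.
move=> pw qn0; apply: le_trans (le_bigmax _ _ i); apply: le_trans (le_bigmax _ _ j).
by rewrite pw (negbTE qn0).
Qed.

Lemma D_inf_pinfty i j : p i * overlap U V i j != 0 -> q j = 0 ->
  D_inf U V p q = +oo%E.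
Proof.
move=> pw q0; apply/eqP; rewrite eq_le leey /=.
apply: le_trans (le_bigmax _ _ i); apply: le_trans (le_bigmax _ _ j).
by rewrite pw q0 eqxx.
Qed.

Lemma D_inf_lt_pinfty : (forall i j, p i * overlap U V i j != 0 -> q j != 0) ->
  (D_inf U V p q < +oo)%E.
Proof.
move=> supp; apply/bigmax_ltP; split => // i _; apply/bigmax_ltP; split => // j _.
by case: ifP => // /supp /negbTE ->; rewrite ltry.
Qed.

End InfinityDivergence.

Theorem theorem2p32 (R : realType) (d : nat) (rho sigma U V : 'M[R[i]]_d)
  (p q : 'I_d -> R) :
  is_state rho -> is_state sigma ->
  spectral_dec rho U p -> spectral_dec sigma V q ->
  (D_KL rho sigma U V p q <=
     (2%:E + D_inf U V p q) * (D_H2 U V p q)%:E)%E.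
Proof.
move=> rho_st sigma_st rho_dec sigma_dec.
have [[hU _] [hV _]] := (rho_dec, sigma_dec).
have p_ge0 := state_eigen_ge0 rho_st rho_dec; have q_ge0 := state_eigen_ge0 sigma_st sigma_dec.
have p_sum := state_eigen_sum rho_st rho_dec; have q_sum := state_eigen_sum sigma_st sigma_dec.
have w_ge0 := @overlap_ge0 R d U V.
have w_row := overlap_row_sum _ hU hV; have w_col := overlap_col_sum _ hU hV.
rewrite D_H2_overlap //.
have [/existsP[i /existsP[j /andP[pw /eqP qj0]]]|/existsPn none] :=
  boolP [exists i, exists j, (p i * overlap U V i j != 0) && (q j == 0)].
  rewrite (D_inf_pinfty pw qj0) addey // gt0_mulye ?leey // lte_fin.
  exact: weighted_hellinger_gt0 pw qj0.
have supp i j : p i * overlap U V i j != 0 -> q j != 0.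
  by move=> pw; have /existsPn/(_ j) := none i; rewrite pw.
have [i0 [j0 [pw0 qp0]]] := exists_weighted_le w_ge0 w_row w_col p_ge0 q_ge0 p_sum q_sum.
set X := D_inf U V p q.
have X_ge i j (pw : p i * overlap U V i j != 0) := D_inf_ge pw (supp i j pw).
have X_ge0 : (0 <= X)%E.
  apply: le_trans (X_ge _ _ pw0); rewrite lee_fin ln_ge0 // ler_pdivlMr ?mul1r //.
  by rewrite lt_def (supp _ _ pw0) q_ge0.
have Xfin : X \is a fin_num by rewrite ge0_fin_numE // D_inf_lt_pinfty.
rewrite /D_KL asboolT; last exact: overlap_support_ker_sub rho_dec sigma_dec supp.
rewrite (rel_entropy_overlap rho_dec hV) ?p_sum ?q_sum // -(fineK Xfin) -EFinD -EFinM.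
rewrite lee_fin weighted_kl_le // => [|i j pw]; first by rewrite -lee_fin fineK.
by split; [exact: supp pw | rewrite -lee_fin fineK // X_ge].
Qed.
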